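(* Let $T$ be a complete theory with monster model $\mathcal{U}$, $A\subseteq\mathcal{U}$ small, $\mu\in\mathfrak{M}_x(\mathcal{U})$, $\nu\in\mathfrak{M}_y(\mathcal{U})$, and $\varphi(y)\in\mathcal{L}_y(A)$ with $0<\nu(\varphi(y))<1$. Suppose $\mu\geq_{\mathbb{E},A}\nu$ and this is witnessed by some $\lambda\in\mathfrak{M}^{\mathrm{Am}}_{xy}(A)$. Then $\mu\geq_{\mathbb{E},A}\nu_{[\varphi]}$.
   Context: For $B\subseteq\mathcal{U}$, $\mathcal{L}_x(B)$ is the Boolean algebra of formulas in $x$ with parameters from $B$ modulo $T$, embedded in $\mathcal{L}_{xy}(B)$ via $\varphi(x)\mapsto\varphi(x)\wedge y=y$; $\mathfrak{M}_x(B)$ is the set of finitely additive probability measures on $\mathcal{L}_x(B)$. For $\omega\in\mathfrak{M}_{xy}(B)$, $\pi_x(\omega)(\varphi(x))=\omega(\varphi(x)\wedge y=y)$ (similarly $\pi_y$); $\omega|_C$ is restriction. $\mu\geq_{\mathbb{E},A}\nu$ witnessed by $\lambda\in\mathfrak{M}_{xy}(A)$ means $\pi_x(\lambda)=\mu|_A$ and every $\omega\in\mathfrak{M}_{xy}(\mathcal{U})$ with $\omega|_A=\lambda$, $\pi_x(\omega)=\mu$ satisfies $\pi_y(\omega)=\nu$. $\mathfrak{M}^{\mathrm{Am}}_{xy}(A)$ is the set of separated amalgams: $\lambda\in\mathfrak{M}_{xy}(A)$ with $\lambda(\varphi(x)\wedge\psi(y))=\pi_x(\lambda)(\varphi(x))\cdot\pi_y(\lambda)(\psi(y))$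 for all $\varphi(x)\in\mathcal{L}_x(A)$, $\psi(y)\in\mathcal{L}_y(A)$. The localization $\nu_{[\varphi]}\in\mathfrak{M}_y(\mathcal{U})$ is $\nu_{[\varphi]}(\psi(y))=\nu(\varphi(y)\wedge\psi(y))/\nu(\varphi(y))$. *)

From mathcomp Require Import all_boot.
From Stdlib Require Import Rdefinitions Raxioms.
From Stdlib Require List.

Set Implicit Arguments.
Unset Strict Implicit.
Unset Printing Implicit Defensive.

Record signature := Signature {
  fsym : Type; farity : fsym -> nat;
  rsym : Type; rarity : rsym -> nat }.

Record structure (L : signature) := Structure {
  carrier :> Type;
  fun_interp : forall f : fsym L, ('I_(farity f) -> carrier) -> carrier;
  rel_interp : forall r : rsym L, ('I_(rarity r) -> carrier) -> Prop }.

Inductive term (L : signature) (P : Type) : Type :=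
  | Tvar of nat
  | Tpar of P
  | Tapp (f : fsym L) of ('I_(farity f) -> term L P).

Inductive formula (L : signature) (P : Type) : Type :=
  | Ftrue
  | Feq of term L P & term L P
  | Frel (r : rsym L) of ('I_(rarity r) -> term L P)
  | Fneg of formula L P
  | Fand of formula L P & formula L P
  | Fex of nat & formula L P.

Arguments Tvar {L P}. Arguments Tpar {L P}. Arguments Tapp {L P}.
Arguments Ftrue {L P}. Arguments Feq {L P}. Arguments Frel {L P}.
Arguments Fneg {L P}. Arguments Fand {L P}. Arguments Fex {L P}.

Definition For L P (p q : formula L P) : formula L P := Fneg (Fand (Fneg p) (Fneg q)).

Definition upd (M : Type) (v : nat -> M) (i : nat) (a : M) : nat -> M :=
  fun k => if k == i then a else v k.

Fixpoint teval L (M : structure L) (v : nat -> M) (t : term L M) : M :=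
  match t with
  | Tvar i => v i
  | Tpar a => a
  | Tapp f args => @fun_interp L M f (fun j => teval v (args j))
  end.

Fixpoint sat L (M : structure L) (v : nat -> M) (p : formula L M) : Prop :=
  match p with
  | Ftrue => True
  | Feq t1 t2 => teval v t1 = teval v t2
  | Frel r args => @rel_interp L M r (fun j => teval v (args j))
  | Fneg q => ~ sat v q
  | Fand q1 q2 => sat v q1 /\ sat v q2
  | Fex i q => exists a : M, sat (upd v i a) q
  end.

Fixpoint term_vars_in L P (S : nat -> Prop) (t : term L P) : Prop :=
  match t with
  | Tvar i => S i
  | Tpar _ => True
  | Tapp f args => forall j, term_vars_in S (args j)
  end.

Fixpoint form_vars_in L P (S : nat -> Prop) (p : formula L P) : Prop :=
  match p with
  | Ftrue => True
  | Feq t1 t2 => term_vars_in S t1 /\ term_vars_in S t2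
  | Frel r args => forall j, term_vars_in S (args j)
  | Fneg q => form_vars_in S q
  | Fand q1 q2 => form_vars_in S q1 /\ form_vars_in S q2
  | Fex i q => form_vars_in (fun k => k = i \/ S k) q
  end.

Fixpoint term_pars_in L P (B : P -> Prop) (t : term L P) : Prop :=
  match t with
  | Tvar _ => True
  | Tpar a => B a
  | Tapp f args => forall j, term_pars_in B (args j)
  end.

Fixpoint form_pars_in L P (B : P -> Prop) (p : formula L P) : Prop :=
  match p with
  | Ftrue => True
  | Feq t1 t2 => term_pars_in B t1 /\ term_pars_in B t2
  | Frel r args => forall j, term_pars_in B (args j)
  | Fneg q => form_pars_in B q
  | Fand q1 q2 => form_pars_in B q1 /\ form_pars_in B q2
  | Fex _ q => form_pars_in B q
  end.

Definition card_lt (X Y : Type) : Prop :=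
  (exists f : X -> Y, injective f) /\ ~ (exists g : Y -> X, injective g).

(* B is small: |B| < kappa, kappa represented by the type K *)
Definition small L (U : structure L) (K : Type) (B : U -> Prop) : Prop :=
  card_lt {a : U | B a} K.

(* kappa-saturation: finitely satisfiable (partial) 1-types over small sets
   are realized *)
Definition saturated L (U : structure L) (K : Type) : Prop :=
  forall B : U -> Prop, small K B ->
  forall p : formula L U -> Prop,
    (forall q, p q -> form_vars_in (fun k => k = 0%N) q /\ form_pars_in B q) ->
    (forall s : list (formula L U), List.Forall p s ->
        exists a : U, List.Forall (fun q => sat (fun _ => a) q) s) ->
    exists a : U, forall q, p q -> sat (fun _ => a) q.

Definition automorphism L (U : structure L) (s : U -> U) : Prop :=
  bijective s /\
  (forall f args, s (@fun_interp L U f args) = @fun_interp L U f (fun j => s (args j))) /\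
  (forall r args, @rel_interp L U r args <-> @rel_interp L U r (fun j => s (args j))).

Definition elementary_on L (U : structure L) (B : U -> Prop) (f : U -> U) : Prop :=
  forall q : formula L U, form_pars_in (fun _ => False) q ->
  forall v : nat -> U, (forall k, B (v k)) -> (sat v q <-> sat (f \o v) q).

Definition str_homogeneous L (U : structure L) (K : Type) : Prop :=
  forall B : U -> Prop, small K B ->
  forall f : U -> U, elementary_on B f ->
  exists s, automorphism s /\ forall a, B a -> s a = f a.

(* U is a monster model (of its complete theory T = Th(U)) with respect to
   the cardinal kappa = |K| > |T| *)
Definition monster L (U : structure L) (K : Type) : Prop :=
  [/\ inhabited U, card_lt (fsym L + rsym L + nat)%type K,
      saturated U K & str_homogeneous U K].

Definition LF L (U : structure L) (x : seq nat) (B : U -> Prop)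
  (p : formula L U) : Prop :=
  form_vars_in (fun k => k \in x) p /\ form_pars_in B p.

(* equivalence modulo T (with parameters): same realizations in U *)
Definition equivU L (U : structure L) (p q : formula L U) : Prop :=
  forall v : nat -> U, sat v p <-> sat v q.

Definition setT_ (U : Type) : U -> Prop := fun _ => True.

(* A (representative of a) finitely additive probability measure on
   L_x(B); only its values on formulas satisfying LF x B matter. *)
Definition keisler L (U : structure L) (x : seq nat) (B : U -> Prop)
  (mu : formula L U -> R) : Prop :=
  [/\ forall p q, LF x B p -> LF x B q -> equivU p q -> mu p = mu q,
      forall p, LF x B p -> Rle 0 (mu p),
      mu Ftrue = 1%R &
      forall p q, LF x B p -> LF x B q ->
        (forall v, ~ (sat v p /\ sat v q)) ->
        mu (For p q) = Rplus (mu p) (mu q)].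

(* equality of two measures as elements of M_x(B) *)
Definition agree L (U : structure L) (x : seq nat) (B : U -> Prop)
  (mu nu : formula L U -> R) : Prop :=
  forall p, LF x B p -> mu p = nu p.

Definition tuple_eq L P (y : seq nat) : formula L P :=
  foldr (fun i acc => Fand (Feq (Tvar i) (Tvar i)) acc) Ftrue y.

Definition pi_x L (U : structure L) (y : seq nat) (om : formula L U -> R) :
  formula L U -> R := fun p => om (Fand p (@tuple_eq L U y)).

Definition pi_y L (U : structure L) (x : seq nat) (om : formula L U -> R) :
  formula L U -> R := fun q => om (Fand (@tuple_eq L U x) q).

Definition E_dom_witness L (U : structure L) (x y : seq nat) (A : U -> Prop)
  (mu nu lam : formula L U -> R) : Prop :=
  [/\ keisler (x ++ y) A lam,
      agree x A (pi_x y lam) mu &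
      forall om, keisler (x ++ y) (@setT_ U) om ->
        agree (x ++ y) A om lam ->
        agree x (@setT_ U) (pi_x y om) mu ->
        agree y (@setT_ U) (pi_y x om) nu].

Definition E_dom L (U : structure L) (x y : seq nat) (A : U -> Prop)
  (mu nu : formula L U -> R) : Prop :=
  exists lam, E_dom_witness x y A mu nu lam.

Definition sep_amalgam L (U : structure L) (x y : seq nat) (A : U -> Prop)
  (lam : formula L U -> R) : Prop :=
  keisler (x ++ y) A lam /\
  forall p q, LF x A p -> LF y A q ->
    lam (Fand p q) = Rmult (pi_x y lam p) (pi_y x lam q).

Definition localize L (U : structure L) (nu : formula L U -> R)
  (phi : formula L U) : formula L U -> R :=
  fun q => Rdiv (nu (Fand phi q)) (nu phi).

From mathcomp Require Import all_boot.
From Stdlib Require Import Rdefinitions.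
From mathcomp Require Import boolp classical_sets.
From Stdlib Require Import Reals Lra.

(* Write lam_e (th) := lam (e /\ th) / lam e.  Then lam = c lam_phi + (1 - c) lam_~phi
   with c = lam phi, and c = nu phi because every extension of lam to L_xy(U)
   with x-marginal mu has y-marginal nu.  Since lam is a separated amalgam,
   lam_phi and lam_~phi still have x-marginal mu over A, and lam_phi witnesses
   mu >= nu_[phi]: if om extends lam_phi with x-marginal mu, extend lam_~phi
   to om' with x-marginal mu; then c om + (1 - c) om' extends lam with
   x-marginal mu, so its y-marginal is nu, and as om phi = 1 and om' phi = 0
   the y-marginal of om is nu_[phi].  Such extensions exist by a Hahn-Banach
   argument on simple functions. *)

Set Implicit Arguments.
Unset Strict Implicit.
Unset Printing Implicit Defensive.

Section DominatedExtension.
Local Open Scope R_scope.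
Variable Om : Type.
Variable ub : (Om -> R) -> R -> Prop.
Hypothesis ub_add :
  forall {g h r s}, ub g r -> ub h s -> ub (fun v => g v + h v) (r + s).
Hypothesis ub_scale :
  forall {g r} k, 0 < k -> ub g r -> ub (fun v => k * g v) (k * r).
Hypothesis ub_le : forall {g h r}, ub g r -> (forall v, h v <= g v) -> ub h r.
Hypothesis ub00 : ub (fun _ => 0) 0.
Hypothesis ub0_ge0 : forall r, ub (fun _ => 0) r -> 0 <= r.

Definition ub_bounded (g : Om -> R) :=
  (exists r, ub g r) /\ (exists r, ub (fun v => - g v) r).

Record partial_functional := PartialFunctional {
  graph :> (Om -> R) -> R -> Prop;
  graph0 : graph (fun _ => 0) 0;
  graph_lin : forall a b g h r s, graph g r -> graph h s ->
    graph (fun v => a * g v + b * h v) (a * r + b * s);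
  graph_ub : forall g r s, graph g r -> ub g s -> r <= s }.

Implicit Types (P Q : partial_functional) (g h w : Om -> R).

Lemma graph_scale P k g r : P g r -> P (fun v => k * g v) (k * r).
Proof.
move=> Pg; have := graph_lin k 0 Pg Pg.
have -> : (fun v => k * g v + 0 * g v) = (fun v => k * g v).
  by apply: funext => v; ring.
by have -> : k * r + 0 * r = k * r by ring.
Qed.

Lemma graph_functional P g r s : P g r -> P g s -> r = s.
Proof.
move=> Pr Ps; have := graph_lin 1 (-1) Pr Ps.
have -> : (fun v => 1 * g v + -1 * g v) = (fun _ => 0).
  by apply: funext => v; ring.
move=> P0; have := graph_ub P0 ub00; have := graph_lin (-1) 0 P0 P0.
have -> : (fun _ : Om => -1 * 0 + 0 * 0) = (fun _ => 0).
  by apply: funext => v; ring.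
move=> /graph_ub /(_ ub00); lra.
Qed.

Definition extends P Q := forall g r, P g r -> Q g r.

Definition zero_functional : partial_functional.
Proof.
refine (@PartialFunctional (fun g r => g = (fun _ => 0) /\ r = 0) _ _ _).
- by [].
- move=> a b g h r s [-> ->] [-> ->]; split; first by apply: funext => v; ring.
  ring.
- by move=> g r s [-> ->] /ub0_ge0.
Defined.

Section ChainUnion.
Variable C : partial_functional -> Prop.
Hypothesis C_total : forall P Q, C P -> C Q -> extends P Q \/ extends Q P.
Variable P1 : partial_functional.
Hypothesis C_P1 : C P1.

Definition chain_union : partial_functional.
Proof.
refine (@PartialFunctional (fun g r => exists2 P, C P & P g r) _ _ _).
- by exists P1 => //; apply: graph0.
- move=> a b g h r s [P CP Pg] [Q CQ Qh].
  have [PQ|QP] := C_total CP CQ.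
  + by exists Q => //; apply: graph_lin => //; apply: PQ.
  + by exists P => //; apply: graph_lin => //; apply: QP.
- by move=> g r s [P _ Pg]; apply: graph_ub Pg.
Defined.

Lemma extends_chain_union P : C P -> extends P chain_union.
Proof. by move=> CP g r Pg; exists P. Qed.
End ChainUnion.

Section OneStep.
Variables (P : partial_functional) (t : Om -> R).
Hypothesis t_bounded : ub_bounded t.

Lemma exists_value_at :
  exists tau,
    (forall w a r, P w a -> ub (fun v => w v - t v) r -> a - r <= tau) /\
    (forall w a r, P w a -> ub (fun v => w v + t v) r -> tau <= r - a).
Proof.
have compat w a r w' a' r' : P w a -> ub (fun v => w v - t v) r ->
    P w' a' -> ub (fun v => w' v + t v) r' -> a - r <= r' - a'.
  move=> Pw ubw Pw' ubw'.
  have sum_le v : 1 * w v + 1 * w' v <= (w v - t v) + (w' v + t v) by lra.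
  have := graph_ub (graph_lin 1 1 Pw Pw') (ub_le (ub_add ubw ubw') sum_le); lra.
case: t_bounded => [[r0 ub_t] [r1 ub_nt]].
have ub_0t : ub (fun v => (fun _ => 0) v + t v) r0 by apply: ub_le ub_t _ => v; lra.
have ub_0nt : ub (fun v => (fun _ => 0) v - t v) r1 by apply: ub_le ub_nt _ => v; lra.
pose lower (z : R) := exists w a r, [/\ P w a, ub (fun v => w v - t v) r & z = a - r].
have lower_bounded : bound lower.
  exists (r0 - 0) => z [w [a [r [Pw ubw ->]]]].
  exact: compat Pw ubw (graph0 P) ub_0t.
have lower_inhabited : exists z, lower z.
  by exists (0 - r1), (fun _ => 0), 0, r1; split => //; apply: graph0.
have [tau [tau_ub tau_lub]] := completeness lower lower_bounded lower_inhabited.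
exists tau; split.
- by move=> w a r Pw ubw; apply: tau_ub; exists w, a, r.
- move=> w' a' r' Pw' ubw'; apply: tau_lub => z [w [a [r [Pw ubw ->]]]].
  exact: compat Pw ubw Pw' ubw'.
Qed.

Variable tau : R.
Hypothesis tau_lower :
  forall w a r, P w a -> ub (fun v => w v - t v) r -> a - r <= tau.
Hypothesis tau_upper :
  forall w a r, P w a -> ub (fun v => w v + t v) r -> tau <= r - a.

Lemma extend_at_dominated w a s r : P w a -> ub (fun v => w v + s * t v) r ->
  a + s * tau <= r.
Proof.
move=> Pw ubg; have [s_neg|[s_zero|s_pos]] := Rtotal_order s 0.
- set k := - / s.
  have k_pos : 0 < k by apply/Ropp_0_gt_lt_contravar/Rinv_lt_0_compat.
  have le_k v : k * w v - t v <= k * (w v + s * t v).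
    by apply: Req_le; rewrite /k; field; lra.
  have := tau_lower (graph_scale k Pw) (ub_le (ub_scale k_pos ubg) le_k).
  move=> /(Rmult_le_compat_l (- s) _ _ (ltac:(lra) : 0 <= - s)).
  have -> : - s * (k * a - k * r) = a - r by rewrite /k; field; lra.
  lra.
- subst s; have -> : a + 0 * tau = a by ring.
  have le0 v : w v <= w v + 0 * t v by lra.
  exact: graph_ub Pw (ub_le ubg le0).
- set k := / s.
  have k_pos : 0 < k by apply: Rinv_0_lt_compat.
  have le_k v : k * w v + t v <= k * (w v + s * t v).
    by apply: Req_le; rewrite /k; field; lra.
  have := tau_upper (graph_scale k Pw) (ub_le (ub_scale k_pos ubg) le_k).
  move=> /(Rmult_le_compat_l s _ _ (ltac:(lra) : 0 <= s)).
  have -> : s * (k * r - k * a) = r - a by rewrite /k; field; lra.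
  lra.
Qed.

Definition extend_at : partial_functional.
Proof.
refine (@PartialFunctional (fun g b => exists w a s,
  [/\ P w a, g = (fun v => w v + s * t v) & b = a + s * tau]) _ _ _).
- exists (fun _ => 0), 0, 0; split; [exact: graph0 | apply: funext => v; ring | ring].
- move=> a b g h r s [w [c [s1 [Pw -> ->]]]] [w' [c' [s2 [Pw' -> ->]]]].
  exists (fun v => a * w v + b * w' v), (a * c + b * c'), (a * s1 + b * s2).
  split; [exact: graph_lin | apply: funext => v; ring | ring].
- by move=> g b r [w [a [s [Pw -> ->]]]]; apply: extend_at_dominated.
Defined.

Lemma extends_extend_at : extends P extend_at.
Proof.
move=> w a Pw; exists w, a, 0; split => //; first by apply: funext => v; ring.
ring.
Qed.

Lemma extend_at_t : extend_at t tau.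
Proof.
exists (fun _ => 0), 0, 1; split; [exact: graph0 | apply: funext => v; ring | ring].
Qed.
End OneStep.

Lemma maximal_functional :
  exists P : partial_functional, forall t, ub_bounded t -> exists r, P t r.
Proof.
pose R := fun P Q => `[< extends P Q >].
have [P Pmax] : exists P, premaximal R P.
  apply: (@ZL_preorder _ zero_functional R).
  - by move=> P; apply/asboolP.
  - by move=> P Q S /asboolP PQ /asboolP QS; apply/asboolP => g r /PQ /QS.
  - move=> C C_total; have [[P1 CP1]|noC] := pselect (exists P, C P); last first.
      by exists zero_functional => P CP; case: noC; exists P.
    have C_total' P Q : C P -> C Q -> extends P Q \/ extends Q P.
      by move=> CP CQ; case: (C_total _ _ CP CQ) => /asboolP; [left | right].
    exists (chain_union C_total' CP1) => P CP.
    by apply/asboolP; apply: extends_chain_union.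
exists P => t t_bounded.
have [tau [tau_lower tau_upper]] := exists_value_at P t_bounded.
have /asboolP ext_le := Pmax _ (asboolT (extends_extend_at tau_lower tau_upper)).
by exists tau; apply: ext_le; apply: extend_at_t.
Qed.

Theorem dominated_linear_functional : exists Lam : (Om -> R) -> R,
  (forall a b g h, ub_bounded g -> ub_bounded h ->
     Lam (fun v => a * g v + b * h v) = a * Lam g + b * Lam h) /\
  (forall g r, ub_bounded g -> ub g r -> Lam g <= r).
Proof.
have [P P_dom] := maximal_functional.
pose Lam g := if pselect (exists r, P g r) is left ex then sval (cid ex) else 0.
have P_Lam g r : P g r -> P g (Lam g).
  move=> Pg; rewrite /Lam; case: pselect => [ex|[]]; last by exists r.
  by case: (cid ex).
have bounded_Lam g : ub_bounded g -> P g (Lam g).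
  by move=> /P_dom [r]; apply: P_Lam.
exists Lam; split.
- move=> a b g h /bounded_Lam Pg /bounded_Lam Ph.
  have Pgh := graph_lin a b Pg Ph.
  exact: graph_functional (P_Lam _ _ Pgh) Pgh.
- by move=> g r /bounded_Lam Pg; apply: graph_ub Pg.
Qed.
End DominatedExtension.

Section Formulas.
Local Open Scope R_scope.
Variables (L : signature) (U : structure L).
Notation form := (formula L U).
Implicit Types (p q e th : form) (v : nat -> U).

Lemma teval_coinc (S : nat -> Prop) (t : term L U) v v' :
  term_vars_in S t -> (forall k, S k -> v k = v' k) -> teval v t = teval v' t.
Proof.
elim: t => [i|a|f args IH] /= St vv'; [exact: vv' | by [] |].
by congr (fun_interp _); apply: funext => j; apply: IH.
Qed.

Lemma sat_coinc p : forall (S : nat -> Prop) v v',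
  form_vars_in S p -> (forall k, S k -> v k = v' k) -> (sat v p <-> sat v' p).
Proof.
elim: p => [|t1 t2|r args|q IH|q1 IH1 q2 IH2|i q IH] S v v' /= Sp vv'.
- by [].
- by rewrite (teval_coinc Sp.1 vv') (teval_coinc Sp.2 vv').
- suff -> : (fun j => teval v (args j)) = (fun j => teval v' (args j)) by [].
  by apply: funext => j; apply: teval_coinc (Sp j) vv'.
- by rewrite (IH S v v' Sp vv').
- by rewrite (IH1 S v v' Sp.1 vv') (IH2 S v v' Sp.2 vv').
- have upd_eq a k : k = i \/ S k -> upd v i a k = upd v' i a k.
    by rewrite /upd; case: eqP => // _ [//|/vv'].
  by split=> -[a Ha]; exists a; move: Ha; rewrite (IH _ _ _ Sp (upd_eq a)).
Qed.

Lemma term_vars_mono (S S' : nat -> Prop) (t : term L U) :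
  (forall k, S k -> S' k) -> term_vars_in S t -> term_vars_in S' t.
Proof. by elim: t => [i|a|f args IH] /= SS'; auto. Qed.

Lemma form_vars_mono p : forall (S S' : nat -> Prop),
  (forall k, S k -> S' k) -> form_vars_in S p -> form_vars_in S' p.
Proof.
elim: p => [|t1 t2|r args|q IH|q1 IH1 q2 IH2|i q IH] S S' SS' /=.
- by [].
- by case=> St1 St2; split; apply: term_vars_mono SS' _.
- by move=> St j; apply: term_vars_mono SS' (St j).
- exact: IH.
- by case=> Sq1 Sq2; split; [apply: IH1 Sq1 | apply: IH2 Sq2].
- by apply: IH => k [->|/SS']; [left | right].
Qed.

Lemma term_pars_mono (B B' : U -> Prop) (t : term L U) :
  (forall a, B a -> B' a) -> term_pars_in B t -> term_pars_in B' t.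
Proof. by elim: t => [i|a|f args IH] /= BB'; auto. Qed.

Lemma form_pars_mono (B B' : U -> Prop) p :
  (forall a, B a -> B' a) -> form_pars_in B p -> form_pars_in B' p.
Proof.
move=> BB'; elim: p => [|t1 t2|r args|q IH|q1 IH1 q2 IH2|i q IH] /=; try tauto.
- by case=> Bt1 Bt2; split; apply: term_pars_mono BB' _.
- by move=> Bt j; apply: term_pars_mono BB' (Bt j).
Qed.

Lemma LF_mono (S S' : seq nat) (B B' : U -> Prop) p :
  {subset S <= S'} -> (forall a, B a -> B' a) -> LF S B p -> LF S' B' p.
Proof.
move=> SS' BB' [Sp Bp]; split; last exact: form_pars_mono Bp.
by apply: form_vars_mono Sp => k /SS'.
Qed.

Lemma LF_catl (S S' : seq nat) B p : LF S B p -> LF (S ++ S') B p.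
Proof. by apply: LF_mono => // k kS; rewrite mem_cat kS. Qed.

Lemma LF_catr (S S' : seq nat) B p : LF S' B p -> LF (S ++ S') B p.
Proof. by apply: LF_mono => // k kS'; rewrite mem_cat kS' orbT. Qed.

Lemma LF_setT (S : seq nat) (B : U -> Prop) p : LF S B p -> LF S (@setT_ U) p.
Proof. exact: LF_mono. Qed.

Lemma LF_and S B p q : LF S B p -> LF S B q -> LF S B (Fand p q).
Proof. by move=> [? ?] [? ?]; split; split. Qed.

Lemma LF_true S B : LF S B (@Ftrue L U).
Proof. by []. Qed.

Lemma LF_neg S B p : LF S B p -> LF S B (Fneg p).
Proof. by []. Qed.

Lemma LF_or S B p q : LF S B p -> LF S B q -> LF S B (For p q).
Proof. by move=> [? ?] [? ?]; split; split. Qed.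

Lemma LF_tuple_eq S B (ys : seq nat) :
  {subset ys <= S} -> LF S B (@tuple_eq L U ys).
Proof.
elim: ys => [//|i ys IH] ysS.
have [|Sys Bys] := IH; first by move=> k kys; apply: ysS; rewrite inE kys orbT.
by split; split => //=; split; apply: ysS; rewrite inE eqxx.
Qed.

Lemma sat_tuple_eq v (ys : seq nat) : sat v (@tuple_eq L U ys).
Proof. by elim: ys. Qed.

Lemma sat_and_tuple_eql v ys p : sat v (Fand (@tuple_eq L U ys) p) <-> sat v p.
Proof. by have := sat_tuple_eq v ys; rewrite /=; tauto. Qed.

Lemma sat_and_tuple_eqr v ys p : sat v (Fand p (@tuple_eq L U ys)) <-> sat v p.
Proof. by have := sat_tuple_eq v ys; rewrite /=; tauto. Qed.

Lemma sat_or v p q : sat v (For p q) <-> sat v p \/ sat v q.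
Proof.
split => [npq|[sp|sq] [np nq]] //; apply: contrapT => nor.
by apply: npq; split => s; apply: nor; [left | right].
Qed.

Section KeislerMeasure.
Variables (S : seq nat) (B : U -> Prop) (m : form -> R).
Hypothesis m_keisler : keisler S B m.
Notation D := (LF S B).

Lemma keisler_equiv p q : D p -> D q -> equivU p q -> m p = m q.
Proof. by case: m_keisler => + _ _ _; apply. Qed.

Lemma keisler_ge0 p : D p -> 0 <= m p.
Proof. by case: m_keisler => _ + _ _; apply. Qed.

Lemma keisler_true : m Ftrue = 1.
Proof. by case: m_keisler. Qed.

Lemma keisler_or p q : D p -> D q -> (forall v, ~ (sat v p /\ sat v q)) ->
  m (For p q) = m p + m q.
Proof. by case: m_keisler => _ _ _; apply. Qed.

Lemma keisler_null p : D p -> (forall v, ~ sat v p) -> m p = 0.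
Proof.
move=> Dp unsat.
have := keisler_or Dp Dp (fun v spp => unsat v spp.1).
have -> : m (For p p) = m p.
  by apply: keisler_equiv (LF_or Dp Dp) Dp _ => v; rewrite sat_or; tauto.
lra.
Qed.

Lemma keisler_split p e : D p -> D e ->
  m p = m (Fand p e) + m (Fand p (Fneg e)).
Proof.
move=> Dp De; have Dpe := LF_and Dp De; have Dpne := LF_and Dp (LF_neg De).
rewrite -(keisler_or Dpe Dpne) /=; last by move=> v; tauto.
apply: keisler_equiv (LF_or Dpe Dpne) _ => // v; rewrite sat_or /=.
by have [] := pselect (sat v e); tauto.
Qed.

Lemma keisler_le p q : D p -> D q -> (forall v, sat v p -> sat v q) -> m p <= m q.
Proof.
move=> Dp Dq pq; rewrite (keisler_split Dq Dp).
have -> : m (Fand q p) = m p.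
  by apply: keisler_equiv (LF_and Dq Dp) Dp _ => v /=; split => [[]|/[dup]/pq].
by have := keisler_ge0 (LF_and Dq (LF_neg Dp)); lra.
Qed.

Lemma keisler_neg p : D p -> m (Fneg p) = 1 - m p.
Proof.
move=> Dp; have := keisler_split (LF_true S B) Dp.
rewrite keisler_true.
have -> : m (Fand Ftrue p) = m p.
  by apply: keisler_equiv (LF_and (LF_true S B) Dp) Dp _ => v /=; tauto.
have -> : m (Fand Ftrue (Fneg p)) = m (Fneg p).
  by apply: keisler_equiv (LF_and (LF_true S B) (LF_neg Dp)) (LF_neg Dp) _ => v /=; tauto.
lra.
Qed.

Lemma keisler_and_null th e : D th -> D e -> m e = 0 -> m (Fand th e) = 0.
Proof.
move=> Dth De me0; apply: Rle_antisym; last exact: keisler_ge0 (LF_and Dth De).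
by rewrite -me0; apply: keisler_le (LF_and Dth De) De _ => v [].
Qed.

Lemma keisler_and_full th e : D th -> D e -> m (Fneg e) = 0 ->
  m (Fand th e) = m th.
Proof.
move=> Dth De mne0.
by rewrite [RHS](keisler_split Dth De) (keisler_and_null Dth (LF_neg De) mne0) Rplus_0_r.
Qed.
End KeislerMeasure.

Lemma keisler_pi_x (x y : seq nat) B m p : keisler (x ++ y) B m -> LF (x ++ y) B p ->
  pi_x y m p = m p.
Proof.
move=> mK Dp; apply: (keisler_equiv mK) => [|//|v]; last exact: sat_and_tuple_eqr.
by apply: LF_and Dp _; apply: LF_tuple_eq => k ky; rewrite mem_cat ky orbT.
Qed.

Lemma keisler_pi_y (x y : seq nat) B m q : keisler (x ++ y) B m -> LF (x ++ y) B q ->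
  pi_y x m q = m q.
Proof.
move=> mK Dq; apply: (keisler_equiv mK) => [|//|v]; last exact: sat_and_tuple_eql.
by apply: LF_and _ Dq; apply: LF_tuple_eq => k kx; rewrite mem_cat kx.
Qed.

Lemma keisler_localize S B m e : keisler S B m -> LF S B e -> 0 < m e ->
  keisler S B (localize m e).
Proof.
move=> mK De me_pos; rewrite /localize; split.
- move=> p q Dp Dq pq; congr (_ / _).
  by apply: (keisler_equiv mK (LF_and De Dp) (LF_and De Dq)) => v /=; rewrite pq.
- move=> p Dp; apply: Rle_mult_inv_pos => //.
  exact: (keisler_ge0 mK (LF_and De Dp)).
- have -> : m (Fand e Ftrue) = m e.
    by apply: (keisler_equiv mK (LF_and De (LF_true S B)) De) => v /=; tauto.
  by field; lra.
- move=> p q Dp Dq disj.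
  have Dep := LF_and De Dp; have Deq := LF_and De Dq.
  rewrite (keisler_equiv mK (LF_and De (LF_or Dp Dq)) (LF_or Dep Deq)); last first.
    move=> v; have := sat_or v p q.
    by have := sat_or v (Fand e p) (Fand e q) => /=; tauto.
  rewrite (keisler_or mK Dep Deq) => [|v /= [[_ sp] [_ sq]]].
    exact: Rdiv_plus_distr.
  exact: disj v (conj sp sq).
Qed.

Lemma localize_disjoint S B m e p : keisler S B m -> LF S B e -> LF S B p ->
  (forall v, ~ (sat v e /\ sat v p)) -> localize m e p = 0.
Proof.
move=> mK De Dp disj; rewrite /localize (keisler_null mK (LF_and De Dp) disj).
exact: Rmult_0_l.
Qed.

Lemma localize_mixture S B m e th : keisler S B m -> LF S B e -> LF S B th ->
  0 < m e < 1 -> m e * localize m e th + (1 - m e) * localize m (Fneg e) th = m th.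
Proof.
move=> mK De Dth e01; rewrite /localize -(keisler_neg mK De).
have ne_pos : 0 < m (Fneg e) by rewrite (keisler_neg mK De); lra.
rewrite [RHS](keisler_split mK Dth De).
rewrite (keisler_equiv mK (LF_and Dth De) (LF_and De Dth)) => [|v /=]; last tauto.
rewrite (keisler_equiv mK (LF_and Dth (LF_neg De)) (LF_and (LF_neg De) Dth)).
  by field; lra.
by move=> v /=; tauto.
Qed.

Lemma agree_localize_disjoint S B m (om : form -> R) e p :
  keisler S B m -> LF S B e -> LF S B p -> (forall v, ~ (sat v e /\ sat v p)) ->
  agree S B om (localize m e) -> om p = 0.
Proof.
by move=> mK De Dp disj om_m; rewrite om_m // (localize_disjoint mK De Dp disj).
Qed.

Lemma agree_localize_mixture S B m (om om' : form -> R) e :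
  keisler S B m -> LF S B e -> 0 < m e < 1 ->
  agree S B om (localize m e) -> agree S B om' (localize m (Fneg e)) ->
  agree S B (fun th => m e * om th + (1 - m e) * om' th) m.
Proof.
move=> mK De e01 om_m om'_m th Dth; rewrite om_m // om'_m //.
exact: (localize_mixture mK De Dth e01).
Qed.

Lemma keisler_convex S B m m' c : keisler S B m -> keisler S B m' -> 0 <= c <= 1 ->
  keisler S B (fun th => c * m th + (1 - c) * m' th).
Proof.
move=> mK m'K c01; split.
- move=> p q Dp Dq pq.
  by rewrite (keisler_equiv mK Dp Dq pq) (keisler_equiv m'K Dp Dq pq).
- move=> p Dp; have := keisler_ge0 mK Dp; have := keisler_ge0 m'K Dp.
  by move=> m'p mp; apply: Rplus_le_le_0_compat; apply: Rmult_le_pos; lra.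
- by rewrite (keisler_true mK) (keisler_true m'K); ring.
- by move=> p q Dp Dq disj; rewrite (keisler_or mK) // (keisler_or m'K) //; ring.
Qed.
Lemma agree_convex S B (m m' n : form -> R) c : agree S B m n -> agree S B m' n ->
  agree S B (fun p => c * m p + (1 - c) * m' p) n.
Proof. by move=> mn m'n p Dp; rewrite mn // m'n //; ring. Qed.

End Formulas.

Section SimpleFunctions.
Local Open Scope R_scope.
Variables (L : signature) (U : structure L).
Notation form := (formula L U).
Implicit Types (p c e : form) (v : nat -> U).

Definition satb v p : bool := `[< sat v p >].

Lemma satbP v p : reflect (sat v p) (satb v p).
Proof. exact: asboolP. Qed.

(* Simple functions, encoded as decision trees over formulas. *)
Inductive dtree := Leaf of R | Node of form & dtree & dtree.

Fixpoint deval (t : dtree) v : R :=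
  match t with
  | Leaf r => r
  | Node p a b => if satb v p then deval a v else deval b v
  end.

Fixpoint dtree_over (P : form -> Prop) (t : dtree) : Prop :=
  match t with
  | Leaf _ => True
  | Node p a b => [/\ P p, dtree_over P a & dtree_over P b]
  end.

Fixpoint dint (m : form -> R) (t : dtree) c : R :=
  match t with
  | Leaf r => r * m c
  | Node p a b => dint m a (Fand c p) + dint m b (Fand c (Fneg p))
  end.

Fixpoint dmap (f : R -> R) (t : dtree) : dtree :=
  match t with
  | Leaf r => Leaf (f r)
  | Node p a b => Node p (dmap f a) (dmap f b)
  end.

Fixpoint dadd (t t' : dtree) : dtree :=
  match t with
  | Leaf r => dmap (Rplus r) t'
  | Node p a b => Node p (dadd a t') (dadd b t')
  end.

Fixpoint dmin (t t' : dtree) : dtree :=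
  match t with
  | Leaf r => dmap (Rmin r) t'
  | Node p a b => Node p (dmin a t') (dmin b t')
  end.

Definition indicator p : dtree := Node p (Leaf 1) (Leaf 0).

Implicit Types (t a b : dtree) (P Q : form -> Prop).

Lemma deval_Node_sat v p a b : sat v p -> deval (Node p a b) v = deval a v.
Proof. by move=> /satbP /= ->. Qed.

Lemma deval_Node_unsat v p a b : ~ sat v p -> deval (Node p a b) v = deval b v.
Proof. by move=> /satbP /negbTE /= ->. Qed.

Lemma deval_map f t v : deval (dmap f t) v = f (deval t v).
Proof. by elim: t => //= p a IHa b IHb; case: satb. Qed.

Lemma deval_add t t' v : deval (dadd t t') v = deval t v + deval t' v.
Proof. by elim: t => /= [r|p a IHa b IHb]; [exact: deval_map | case: satb]. Qed.

Lemma deval_min t t' v : deval (dmin t t') v = Rmin (deval t v) (deval t' v).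
Proof. by elim: t => /= [r|p a IHa b IHb]; [exact: deval_map | case: satb]. Qed.

Lemma deval_indicator_le v p : 0 <= deval (indicator p) v <= 1.
Proof. by rewrite /=; case: satb; lra. Qed.

Lemma deval_indicator_equiv p q : equivU p q -> deval (indicator p) = deval (indicator q).
Proof. by move=> pq; apply: funext => v; rewrite /= /satb (propext (pq v)). Qed.

Lemma deval_indicator_or v p q : ~ (sat v p /\ sat v q) ->
  deval (indicator (For p q)) v = deval (indicator p) v + deval (indicator q) v.
Proof.
rewrite /= => disj; have := sat_or v p q.
by case: satbP => ?; case: satbP => ?; case: satbP => ?; first [move=> _; lra | tauto].
Qed.

Lemma dtree_over_mono P Q t : (forall p, P p -> Q p) -> dtree_over P t -> dtree_over Q t.
Proof. by move=> PQ; elim: t => //= p a IHa b IHb [/PQ ? /IHa ? /IHb ?]. Qed.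

Lemma dtree_over_map P f t : dtree_over P t -> dtree_over P (dmap f t).
Proof. by elim: t => //= p a IHa b IHb [? /IHa ? /IHb ?]. Qed.

Lemma dtree_over_add P t t' :
  dtree_over P t -> dtree_over P t' -> dtree_over P (dadd t t').
Proof.
move=> + Pt'; elim: t => /= [r _|p a IHa b IHb [? /IHa ? /IHb ?]] //.
exact: dtree_over_map.
Qed.

Lemma dtree_over_min P t t' :
  dtree_over P t -> dtree_over P t' -> dtree_over P (dmin t t').
Proof.
move=> + Pt'; elim: t => /= [r _|p a IHa b IHb [? /IHa ? /IHb ?]] //.
exact: dtree_over_map.
Qed.

Lemma deval_coinc (S : nat -> Prop) t v v' : dtree_over (form_vars_in S) t ->
  (forall k, S k -> v k = v' k) -> deval t v = deval t v'.
Proof.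
move=> + vv'; elim: t => //= p a IHa b IHb [Sp /IHa -> /IHb ->].
by rewrite /satb (propext (sat_coinc Sp vv')).
Qed.

Lemma dint_scale m k t c : dint m (dmap (Rmult k) t) c = k * dint m t c.
Proof. by elim: t c => /= [r|p a IHa b IHb] c; rewrite ?IHa ?IHb; ring. Qed.

Section Integral.
Variables (S : seq nat) (B : U -> Prop) (m : form -> R).
Hypothesis m_keisler : keisler S B m.
Notation D := (LF S B).

Lemma dint_equiv t c c' : dtree_over D t -> D c -> D c' -> equivU c c' ->
  dint m t c = dint m t c'.
Proof.
elim: t c c' => /= [r|p a IHa b IHb] c c' => [_|[Dp Da Db]] Dc Dc' cc'.
  by rewrite (keisler_equiv m_keisler Dc Dc' cc').
rewrite (IHa _ (Fand c' p)) ?(IHb _ (Fand c' (Fneg p))) //;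
  by [apply: LF_and | move=> v /=; rewrite cc'].
Qed.

Lemma dint_split t c e : dtree_over D t -> D c -> D e ->
  dint m t c = dint m t (Fand c e) + dint m t (Fand c (Fneg e)).
Proof.
elim: t c => /= [r|p a IHa b IHb] c => [_|[Dp Da Db]] Dc De.
  by rewrite (keisler_split m_keisler Dc De); ring.
have Dne := LF_neg De; have Dnp := LF_neg Dp.
rewrite (IHa _ Da (LF_and Dc Dp) De) (IHb _ Db (LF_and Dc Dnp) De).
have swap t' q r s : dtree_over D t' -> D q -> D r -> D s ->
    dint m t' (Fand (Fand q r) s) = dint m t' (Fand (Fand q s) r).
  move=> Dt' Dq Dr Ds; apply: dint_equiv => //; do ?apply: LF_and => //.
  by move=> v /=; tauto.
rewrite (swap a c p e) // (swap a c p (Fneg e)) // (swap b c (Fneg p) e) //.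
rewrite (swap b c (Fneg p) (Fneg e)) //; ring.
Qed.

Lemma dint_le_const t c r : dtree_over D t -> D c ->
  (forall v, sat v c -> deval t v <= r) -> dint m t c <= r * m c.
Proof.
elim: t c => /= [s|p a IHa b IHb] c => [_|[Dp Da Db]] Dc le_r.
  have [[v cv]|unsat] := pselect (exists v, sat v c).
    exact: Rmult_le_compat_r (keisler_ge0 m_keisler Dc) (le_r v cv).
  by rewrite (keisler_null m_keisler Dc) => [|v cv]; [lra | apply: unsat; exists v].
rewrite (keisler_split m_keisler Dc Dp).
have le_a : dint m a (Fand c p) <= r * m (Fand c p).
  apply: IHa (LF_and Dc Dp) _ => // v [cv /satbP pv].
  by move: (le_r v cv); rewrite pv.
have le_b : dint m b (Fand c (Fneg p)) <= r * m (Fand c (Fneg p)).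
  apply: IHb (LF_and Dc (LF_neg Dp)) _ => // v [cv /satbP/negbTE pv].
  by move: (le_r v cv); rewrite pv.
lra.
Qed.

Lemma dint_le t t' c : dtree_over D t -> dtree_over D t' -> D c ->
  (forall v, sat v c -> deval t' v <= deval t v) -> dint m t' c <= dint m t c.
Proof.
elim: t c => /= [r|p a IHa b IHb] c => [_|[Dp Da Db]] Dt' Dc le_t.
  exact: dint_le_const.
rewrite (dint_split Dt' Dc Dp).
have le_a : dint m t' (Fand c p) <= dint m a (Fand c p).
  apply: IHa (LF_and Dc Dp) _ => // v [cv /satbP pv].
  by move: (le_t v cv); rewrite pv.
have le_b : dint m t' (Fand c (Fneg p)) <= dint m b (Fand c (Fneg p)).
  apply: IHb (LF_and Dc (LF_neg Dp)) _ => // v [cv /satbP/negbTE pv].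
  by move: (le_t v cv); rewrite pv.
lra.
Qed.

Lemma dint_shift r t c : dtree_over D t -> D c ->
  dint m (dmap (Rplus r) t) c = r * m c + dint m t c.
Proof.
elim: t c => /= [s|p a IHa b IHb] c => [_|[Dp Da Db]] Dc; first ring.
rewrite (IHa _ Da (LF_and Dc Dp)) (IHb _ Db (LF_and Dc (LF_neg Dp))).
rewrite (keisler_split m_keisler Dc Dp); ring.
Qed.

Lemma dint_add t t' c : dtree_over D t -> dtree_over D t' -> D c ->
  dint m (dadd t t') c = dint m t c + dint m t' c.
Proof.
elim: t c => /= [r|p a IHa b IHb] c => [_|[Dp Da Db]] Dt' Dc.
  exact: dint_shift.
rewrite (IHa _ Da Dt' (LF_and Dc Dp)) (IHb _ Db Dt' (LF_and Dc (LF_neg Dp))).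
rewrite (dint_split Dt' Dc Dp); ring.
Qed.

Lemma dint_indicator p : D p -> dint m (indicator p) Ftrue = m p.
Proof.
move=> Dp; rewrite /= (keisler_equiv m_keisler (LF_and (LF_true S B) Dp) Dp).
  by ring.
by move=> v /=; tauto.
Qed.
End Integral.
End SimpleFunctions.
Arguments Leaf {L U}.
Arguments Node {L U}.

Section Amalgamation.
Local Open Scope R_scope.
Variables (L : signature) (U : structure L).
Notation form := (formula L U).
Implicit Types (p c e : form) (v : nat -> U) (t : dtree U).

Definition exists_vars (ys : seq nat) p : form := foldr Fex p ys.

Lemma sat_exists_vars ys p v : sat v (exists_vars ys p) <->
  exists2 v', (forall k, k \notin ys -> v' k = v k) & sat v' p.
Proof.
elim: ys v => [|i ys IH] v /=.
  split=> [pv|[v' vv' pv']]; first by exists v.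
  by have <- : v' = v by apply: funext => k; apply: vv'.
split=> [[a /IH [v' vv' pv']]|[v' vv' pv']].
  exists v' => // k; rewrite inE negb_or => /andP [ki kys].
  by rewrite vv' // /upd (negbTE ki).
exists (v' i); apply/IH; exists v' => // k kys.
rewrite /upd; case: eqP => [-> //|/eqP ki].
by apply: vv'; rewrite inE negb_or ki.
Qed.

Lemma sat_exists_vars_self ys p v : sat v p -> sat v (exists_vars ys p).
Proof. by move=> pv; apply/sat_exists_vars; exists v. Qed.

Lemma form_vars_exists_vars ys p (S : nat -> Prop) :
  form_vars_in (fun k => k \in ys \/ S k) p -> form_vars_in S (exists_vars ys p).
Proof.
elim: ys S => [|i ys IH] S /= ysSp.
  by apply: form_vars_mono ysSp => k [].
apply: IH; apply: form_vars_mono ysSp => k [|Sk]; last by right; right.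
by rewrite inE => /orP [/eqP ->|kys]; [right; left | left].
Qed.

Lemma form_pars_exists_vars ys p (B : U -> Prop) :
  form_pars_in B p -> form_pars_in B (exists_vars ys p).
Proof. by elim: ys => //= i ys IH /IH. Qed.

Variables (x y : seq nat) (A : U -> Prop).
Notation Dxy := (LF (x ++ y) A).
Notation Dx := (LF x A).
Notation DxU := (LF x (@setT_ U)).

Lemma LF_exists_vars c : Dxy c -> Dx (exists_vars y c).
Proof.
move=> [Sc Bc]; split; last exact: form_pars_exists_vars.
apply: form_vars_exists_vars; apply: form_vars_mono Sc => k.
by rewrite mem_cat => /orP []; [right | left].
Qed.

(* [fiber_min t c] is a simple function over L_x(A) whose value at [v] is
   the minimum of [t] over the points of [c] that differ from [v] only on
   [y] (whenever there are such points). *)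
Fixpoint fiber_min t c : dtree U :=
  match t with
  | Leaf r => Leaf r
  | Node e a b =>
      let ma := fiber_min a (Fand c e) in
      let mb := fiber_min b (Fand c (Fneg e)) in
      Node (exists_vars y (Fand c e))
        (Node (exists_vars y (Fand c (Fneg e))) (dmin ma mb) ma) mb
  end.

Lemma dtree_over_fiber_min t c :
  dtree_over Dxy t -> Dxy c -> dtree_over Dx (fiber_min t c).
Proof.
elim: t c => //= e a IHa b IHb c [De Da Db] Dc.
have Dce := LF_and Dc De; have Dcne := LF_and Dc (LF_neg De).
split; [exact: LF_exists_vars | split | exact: IHb].
- exact: LF_exists_vars.
- by apply: dtree_over_min; [apply: IHa | apply: IHb].
- exact: IHa.
Qed.

Lemma fiber_min_le t c v : sat v c -> deval (fiber_min t c) v <= deval t v.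
Proof.
elim: t c v => [r|e a IHa b IHb] c v cv /=; first exact: Rle_refl.
have [ev|nev] := pselect (sat v e).
- have cev : sat v (Fand c e) by [].
  have le_a := IHa _ _ cev.
  rewrite (introT (satbP _ _) (sat_exists_vars_self y cev)) (introT (satbP _ _) ev).
  case: satbP => // _; rewrite deval_min; exact: Rle_trans (Rmin_l _ _) le_a.
- have cnev : sat v (Fand c (Fneg e)) by [].
  have le_b := IHb _ _ cnev.
  rewrite (introT (satbP _ _) (sat_exists_vars_self y cnev)).
  rewrite (negbTE (introN (satbP _ _) nev)).
  case: satbP => // _; rewrite deval_min; exact: Rle_trans (Rmin_r _ _) le_b.
Qed.

Lemma fiber_min_attained t c v : sat v (exists_vars y c) ->
  exists v', [/\ forall k, k \notin y -> v' k = v k, sat v' c &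
                 deval t v' <= deval (fiber_min t c) v].
Proof.
elim: t c v => [r|e a IHa b IHb] c v cv.
  have [v' vv' cv'] := (sat_exists_vars y c v).1 cv.
  by exists v'; split => //; apply: Rle_refl.
have from_a : sat v (exists_vars y (Fand c e)) -> exists v',
    [/\ forall k, k \notin y -> v' k = v k, sat v' c &
        deval (Node e a b) v' <= deval (fiber_min a (Fand c e)) v].
  move=> /IHa [v' [vv' [cv' ev'] le_a]]; exists v'; split => //.
  by rewrite deval_Node_sat.
have from_b : sat v (exists_vars y (Fand c (Fneg e))) -> exists v',
    [/\ forall k, k \notin y -> v' k = v k, sat v' c &
        deval (Node e a b) v' <= deval (fiber_min b (Fand c (Fneg e))) v].
  move=> /IHb [v' [vv' [cv' nev'] le_b]]; exists v'; split => //.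
  by rewrite deval_Node_unsat.
rewrite /=; case: satbP => [ce|nce].
  case: satbP => [cne|_]; last exact: from_a.
  rewrite deval_min; have [le|lt] := Rle_dec (deval (fiber_min a (Fand c e)) v)
                                             (deval (fiber_min b (Fand c (Fneg e))) v).
    by rewrite Rmin_left //; apply: from_a.
  by rewrite Rmin_right; [apply: from_b | lra].
apply: from_b; have [v' vv' cv'] := (sat_exists_vars y c v).1 cv.
have [ev'|nev'] := pselect (sat v' e).
  by case: nce; apply/sat_exists_vars; exists v'.
by apply/sat_exists_vars; exists v'.
Qed.

Hypothesis xy_disjoint : forall i, i \in x -> i \notin y.
Variables (m1 m2 : form -> R).
Hypothesis m1_keisler : keisler (x ++ y) A m1.
Hypothesis m2_keisler : keisler x (@setT_ U) m2.
Hypothesis m12_agree : agree x A (pi_x y m1) m2.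

Lemma m1_m2_agree p : Dx p -> m1 p = m2 p.
Proof.
by move=> Dp; rewrite -m12_agree // (keisler_pi_x m1_keisler) //; apply: LF_catl.
Qed.

Lemma dint_agree t c : dtree_over Dx t -> Dx c -> dint m1 t c = dint m2 t c.
Proof.
elim: t c => /= [r|e a IHa b IHb] c => [_|[De Da Db]] Dc.
  by rewrite m1_m2_agree.
by rewrite IHa ?IHb //; [apply: LF_and Dc (LF_neg De) | apply: LF_and].
Qed.

(* Minimising [t1] over the [y]-fibres gives a simple function over L_x(A),
   where [m1] and [m2] agree, squeezed between [- t2] and [t1]. *)
Lemma dint_mixed_ge0 t1 t2 : dtree_over Dxy t1 -> dtree_over DxU t2 ->
  (forall v, 0 <= deval t1 v + deval t2 v) -> 0 <= dint m1 t1 Ftrue + dint m2 t2 Ftrue.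
Proof.
move=> Dt1 Dt2 t12_ge0.
have Dh : dtree_over Dx (fiber_min t1 Ftrue) by apply: dtree_over_fiber_min.
have le1 : dint m1 (fiber_min t1 Ftrue) Ftrue <= dint m1 t1 Ftrue.
  apply: (dint_le m1_keisler Dt1 (dtree_over_mono (@LF_catl _ _ _ _ _) Dh) (LF_true _ _)).
  by move=> v _; apply: fiber_min_le.
have le2 : dint m2 (dmap (Rmult (-1)) t2) Ftrue <= dint m2 (fiber_min t1 Ftrue) Ftrue.
  apply: (dint_le m2_keisler (dtree_over_mono (@LF_setT _ _ _ _) Dh)
                  (dtree_over_map _ Dt2) (LF_true _ _)) => v _.
  have [|v' [vv' _ le_v']] := @fiber_min_attained t1 Ftrue v.
    exact: sat_exists_vars_self.
  have t2_v' : deval t2 v' = deval t2 v.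
    apply: deval_coinc (dtree_over_mono (fun p (Dp : DxU p) => Dp.1) Dt2) _.
    by move=> k kx; apply: vv'; apply: xy_disjoint.
  by rewrite deval_map; have := t12_ge0 v'; lra.
rewrite dint_scale in le2; rewrite dint_agree // in le1; lra.
Qed.

Definition mixed_ub (g : (nat -> U) -> R) (r : R) := exists t1 t2,
  [/\ dtree_over Dxy t1, dtree_over DxU t2,
      forall v, g v <= deval t1 v + deval t2 v &
      dint m1 t1 Ftrue + dint m2 t2 Ftrue <= r].

Lemma mixed_ub_add g h r s : mixed_ub g r -> mixed_ub h s ->
  mixed_ub (fun v => g v + h v) (r + s).
Proof.
move=> [t1 [t2 [D1 D2 le_g le_r]]] [u1 [u2 [E1 E2 le_h le_s]]].
exists (dadd t1 u1), (dadd t2 u2); split; try exact: dtree_over_add.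
- by move=> v; rewrite !deval_add; have := le_g v; have := le_h v; lra.
- rewrite (dint_add m1_keisler D1 E1 (LF_true _ _)).
  by rewrite (dint_add m2_keisler D2 E2 (LF_true _ _)); lra.
Qed.

Lemma mixed_ub_scale g r k : 0 < k -> mixed_ub g r ->
  mixed_ub (fun v => k * g v) (k * r).
Proof.
move=> k_pos [t1 [t2 [D1 D2 le_g le_r]]].
exists (dmap (Rmult k) t1), (dmap (Rmult k) t2); split; try exact: dtree_over_map.
- move=> v; rewrite !deval_map -Rmult_plus_distr_l.
  by apply: Rmult_le_compat_l; [lra | apply: le_g].
- by rewrite !dint_scale -Rmult_plus_distr_l; apply: Rmult_le_compat_l; lra.
Qed.

Lemma mixed_ub_le g h r : mixed_ub g r -> (forall v, h v <= g v) -> mixed_ub h r.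
Proof.
move=> [t1 [t2 [D1 D2 le_g le_r]]] hg; exists t1, t2; split => // v.
exact: Rle_trans (hg v) (le_g v).
Qed.

Lemma mixed_ub_xy t g r : dtree_over Dxy t -> (forall v, g v <= deval t v) ->
  dint m1 t Ftrue <= r -> mixed_ub g r.
Proof.
move=> Dt le_g le_r; exists t, (Leaf 0); split => //= [v|].
  by have := le_g v; lra.
by rewrite Rmult_0_l; lra.
Qed.

Lemma mixed_ub_x t g r : dtree_over DxU t -> (forall v, g v <= deval t v) ->
  dint m2 t Ftrue <= r -> mixed_ub g r.
Proof.
move=> Dt le_g le_r; exists (Leaf 0), t; split => //= [v|].
  by have := le_g v; lra.
by rewrite Rmult_0_l; lra.
Qed.

Lemma mixed_ub00 : mixed_ub (fun _ => 0) 0.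
Proof. by apply: (@mixed_ub_xy (Leaf 0)) => //= [v|]; rewrite ?Rmult_0_l; lra. Qed.

Lemma mixed_ub0_ge0 r : mixed_ub (fun _ => 0) r -> 0 <= r.
Proof.
move=> [t1 [t2 [D1 D2 le_0 le_r]]]; have := dint_mixed_ge0 D1 D2 le_0; lra.
Qed.

Lemma mixed_ub_bounded g : (forall v, -1 <= g v <= 1) -> ub_bounded mixed_ub g.
Proof.
move=> g_bd; split; exists (1 * m1 Ftrue).
all: apply: (@mixed_ub_xy (Leaf 1)) => //= [v|]; last exact: Rle_refl.
all: by have := g_bd v; lra.
Qed.

Lemma mixed_ub_indicator S B m p : keisler S B m ->
  (forall t g r, dtree_over (LF S B) t -> (forall v, g v <= deval t v) ->
     dint m t Ftrue <= r -> mixed_ub g r) ->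
  LF S B p ->
  mixed_ub (deval (indicator p)) (m p) /\
  mixed_ub (fun v => - deval (indicator p) v) (- m p).
Proof.
move=> mK ub_of Dp; have ind_p := dint_indicator mK Dp.
split; [apply: (ub_of (indicator p)) | apply: (ub_of (dmap (Rmult (-1)) (indicator p)))].
- by [].
- by move=> v; apply: Rle_refl.
- by rewrite ind_p; apply: Rle_refl.
- exact: dtree_over_map.
- by move=> v; rewrite deval_map; lra.
- by rewrite dint_scale ind_p; lra.
Qed.

Theorem keisler_amalgamation : exists om,
  [/\ keisler (x ++ y) (@setT_ U) om, agree (x ++ y) A om m1 &
      agree x (@setT_ U) (pi_x y om) m2].
Proof.
have [Lam [Lam_lin Lam_ub]] := dominated_linear_functional
  mixed_ub_add mixed_ub_scale mixed_ub_le mixed_ub00 mixed_ub0_ge0.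
pose ind p := deval (indicator p).
have ind_bounded p : ub_bounded mixed_ub (ind p).
  by apply: mixed_ub_bounded => v; have := deval_indicator_le v p; rewrite /ind; lra.
have opp_ind_bounded p : ub_bounded mixed_ub (fun v => - ind p v).
  by apply: mixed_ub_bounded => v; have := deval_indicator_le v p; rewrite /ind; lra.
have Lam_opp p : Lam (fun v => - ind p v) = - Lam (ind p).
  have -> : (fun v => - ind p v) = (fun v => -1 * ind p v + 0 * ind p v).
    by apply: funext => v; ring.
  by rewrite Lam_lin //; ring.
have Lam_ind p r : mixed_ub (ind p) r /\ mixed_ub (fun v => - ind p v) (- r) ->
    Lam (ind p) = r.
  move=> [ub_p ub_np]; have := Lam_ub _ _ (ind_bounded p) ub_p.
  by have := Lam_ub _ _ (opp_ind_bounded p) ub_np; rewrite Lam_opp; lra.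
have Lam_m1 p : Dxy p -> Lam (ind p) = m1 p.
  by move=> /(mixed_ub_indicator m1_keisler mixed_ub_xy) /Lam_ind.
exists (fun p => Lam (ind p)); split.
- split.
  + by move=> p q _ _ pq; rewrite /ind (deval_indicator_equiv pq).
  + move=> p _; rewrite -[Lam _]Ropp_involutive -Lam_opp.
    suff : Lam (fun v => - ind p v) <= 0 by lra.
    apply: Lam_ub (opp_ind_bounded p) (mixed_ub_le mixed_ub00 _) => v.
    by have := deval_indicator_le v p; rewrite /ind; lra.
  + by rewrite Lam_m1 ?(keisler_true m1_keisler).
  + move=> p q _ _ disj.
    have -> : ind (For p q) = (fun v => 1 * ind p v + 1 * ind q v).
      by apply: funext => v; rewrite /ind deval_indicator_or //; ring.
    by rewrite Lam_lin //; ring.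
- exact: Lam_m1.
- move=> p /(mixed_ub_indicator m2_keisler mixed_ub_x) /Lam_ind <-; rewrite /pi_x /ind.
  by rewrite (deval_indicator_equiv (q := p)) // => v; apply: sat_and_tuple_eqr.
Qed.
End Amalgamation.

Section Localization.
Local Open Scope R_scope.
Variables (L : signature) (U : structure L) (x y : seq nat) (A : U -> Prop).
Notation form := (formula L U).
Hypothesis xy_disjoint : forall i, i \in x -> i \notin y.

Lemma E_dom_witness_agree_y (mu nu lam : form -> R) :
  keisler x (@setT_ U) mu -> E_dom_witness x y A mu nu lam -> agree y A nu lam.
Proof.
move=> mu_keisler [lam_keisler lam_mu witness] q Dq.
have [om [om_keisler om_lam om_mu]] :=
  keisler_amalgamation xy_disjoint lam_keisler mu_keisler lam_mu.
have Dq_xy := LF_catr x Dq.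
rewrite -(witness om om_keisler om_lam om_mu q (LF_setT Dq)).
by rewrite (keisler_pi_y om_keisler (LF_setT Dq_xy)) om_lam.
Qed.

Lemma sep_amalgam_localize_pi_x (lam : form -> R) e :
  sep_amalgam x y A lam -> LF y A e -> 0 < lam e ->
  agree x A (pi_x y (localize lam e)) (pi_x y lam).
Proof.
move=> [lam_keisler lam_sep] De e_pos p Dp.
have De_xy := LF_catr x De; have Dp_xy := LF_catl y Dp.
rewrite /pi_x /localize -/(pi_x y lam p).
rewrite (keisler_equiv lam_keisler _ (LF_and Dp_xy De_xy)); first last.
- by move=> v /=; have := sat_tuple_eq v y; tauto.
- have Dy : LF (x ++ y) A (tuple_eq L U y).
    by apply: LF_tuple_eq => k ky; rewrite mem_cat ky orbT.
  exact: LF_and De_xy (LF_and Dp_xy Dy).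
rewrite lam_sep // (keisler_pi_y lam_keisler De_xy); field; lra.
Qed.

Lemma pi_y_mixture_and (om om' : form -> R) c e q :
  keisler (x ++ y) (@setT_ U) om -> keisler (x ++ y) (@setT_ U) om' ->
  LF (x ++ y) (@setT_ U) e -> LF (x ++ y) (@setT_ U) q ->
  om (Fneg e) = 0 -> om' e = 0 ->
  pi_y x (fun th => c * om th + (1 - c) * om' th) (Fand e q) = c * pi_y x om q.
Proof.
move=> omK om'K De Dq om_ne om'_e.
have Dx : LF (x ++ y) (@setT_ U) (tuple_eq L U x).
  by apply: LF_tuple_eq => k kx; rewrite mem_cat kx.
have swap m : keisler (x ++ y) (@setT_ U) m ->
    m (Fand (tuple_eq L U x) (Fand e q)) = m (Fand (Fand (tuple_eq L U x) q) e).
  move=> mK; apply: (keisler_equiv mK) => [||v /=]; last tauto.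
  - exact: LF_and Dx (LF_and De Dq).
  - exact: LF_and (LF_and Dx Dq) De.
rewrite /pi_y (swap om omK) (swap om' om'K).
rewrite (keisler_and_full omK (LF_and Dx Dq) De om_ne).
by rewrite (keisler_and_null om'K (LF_and Dx Dq) De om'_e); ring.
Qed.
End Localization.

Theorem proposition3p20 (L : signature) (U : structure L) (K : Type)
  (hU : monster U K) (A : U -> Prop) (hA : small K A)
  (x y : seq nat) (hx : uniq x) (hy : uniq y)
  (hxy : forall i, i \in x -> i \notin y)
  (mu nu : formula L U -> R)
  (hmu : keisler x (@setT_ U) mu) (hnu : keisler y (@setT_ U) nu)
  (phi : formula L U) (hphi : LF y A phi)
  (h0 : Rlt 0 (nu phi)) (h1 : Rlt (nu phi) 1)
  (lam : formula L U -> R) (hlam : sep_amalgam x y A lam)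
  (hw : E_dom_witness x y A mu nu lam) :
  E_dom x y A mu (localize nu phi).
Proof.
Local Open Scope R_scope.
have [lam_keisler lam_mu witness] := hw.
have Dphi := LF_catr x hphi.
have nu_lam : nu phi = lam phi := E_dom_witness_agree_y hxy hmu hw hphi.
have lam_phi : 0 < lam phi < 1 by rewrite -nu_lam.
have lam_nphi : 0 < lam (Fneg phi) by rewrite (keisler_neg lam_keisler Dphi); lra.
have loc_mu e : LF y A e -> 0 < lam e -> agree x A (pi_x y (localize lam e)) mu.
  by move=> De e_pos p Dp; rewrite (sep_amalgam_localize_pi_x hlam) // lam_mu.
have loc_phi := keisler_localize lam_keisler Dphi (proj1 lam_phi).
exists (localize lam phi); split=> //; first exact: loc_mu hphi (proj1 lam_phi).
move=> om om_keisler om_loc om_mu q Dq.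
have [om' [om'_keisler om'_loc om'_mu]] :=
  keisler_amalgamation hxy (keisler_localize lam_keisler (LF_neg Dphi) lam_nphi) hmu
    (loc_mu _ (LF_neg hphi) lam_nphi).
have lam_phi01 : 0 <= lam phi <= 1 by lra.
have mix_nu := witness _ (keisler_convex om_keisler om'_keisler lam_phi01)
  (agree_localize_mixture lam_keisler Dphi lam_phi om_loc om'_loc)
  (agree_convex (lam phi) om_mu om'_mu).
rewrite /localize -(mix_nu _ (LF_and (LF_setT hphi) Dq)) nu_lam.
rewrite (pi_y_mixture_and _ om_keisler om'_keisler (LF_setT Dphi) (LF_catr x Dq)).
- by field; lra.
- apply: (agree_localize_disjoint lam_keisler Dphi (LF_neg Dphi)) om_loc.
  by move=> v [].
- apply: (agree_localize_disjoint lam_keisler (LF_neg Dphi) Dphi) om'_loc.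
  by move=> v [].
Qed.
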